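(* Let $A=(\{0,1\},f_c,f_d)$ be the self-similar cellular automaton with $f_c(x,y,z)=f_d(x,y,z)=z$ for all $x,y,z\in\{0,1\}$ (the left shift). Then for every initial configuration $c:\mathbb{Z}\to\{0,1\}$ and every $b\in\{0,1\}$ there exists an evolution $s$ of $A$ from $c$ with $s(0,1)=b$. In particular the state of cell $0$ during the time interval $[1,2)$ is not deterministic, for any initial configuration.
   Context: A self-similar cellular automaton is a triple $A=(S,f_c,f_d)$ with $S$ a finite set of states and $f_c,f_d:S^3\to S$. Cells are indexed by $j\in\mathbb{Z}$; cell $j$ has cycles $[k/2^j,(k+1)/2^j)$, and the $k$-th cycle of cell $j$ is identified with the pair $(j,k)$. The automaton is started at time $0$; the set of cycles is $C=\{(i,k): i\in\mathbb{Z},\ k\in\mathbb{Z}_{\ge 0}\}$. Given an initial configuration $c:\mathbb{Z}\to S$, an evolution of $A$ from $c$ is a map $s:C\to S$ with $s(i,0)=c(i)$ for all $i$ and, for all $(i,k)$ with $k\ge1$, $s(i,k)=f_c\big(s(i-1,\lfloor (k-1)/2\rfloor),s(i,k-1),s(i+1,2k-1)\big)$ if $k$ is even and $s(i,k)=f_d(\text{same arguments})$ if $k$ is odd. The cycle $(0,1)$ is the state of cell $0$ during $[1,2)$. *)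

From Stdlib Require Import ZArith Arith.

(* A self-similar cellular automaton (S, f_c, f_d). Finiteness of S is
   irrelevant for the statement; the instance below uses bool = {0,1}. *)
Record SSCA (S : Type) := mkSSCA {
  f_c : S -> S -> S -> S;
  f_d : S -> S -> S -> S
}.
Arguments f_c {S} _ _ _ _.
Arguments f_d {S} _ _ _ _.

(* s : Z -> nat -> S, s i k is the state of cycle (i,k). *)
Definition is_evolution {S : Type} (A : SSCA S) (c : Z -> S)
    (s : Z -> nat -> S) : Prop :=
  (forall i : Z, s i 0 = c i) /\
  (forall (i : Z) (k : nat), 1 <= k ->
     s i k = (if Nat.even k then f_c A else f_d A)
               (s (i - 1)%Z (Nat.div2 (k - 1)))
               (s i (k - 1))
               (s (i + 1)%Z (2 * k - 1))).

Definition shiftCA : SSCA bool := mkSSCA bool (fun _ _ z => z) (fun _ _ z => z).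

From Stdlib Require Import ZArith Arith Lia.

(* Under the left shift every transition just copies the third
   argument, so cycle (i,k) with k >= 1 must equal cycle (i+1, 2k-1).  Since
   2k-1 >= 1, this constraint only ever relates cycles of positive index to
   other cycles of positive index; the initial configuration (index 0) is never
   consulted.  Hence any space-time diagram that agrees with c at time 0 and is
   constant, equal to b, on all later cycles is an evolution. *)

(* Both transition functions of the shift return their third argument, so the
   even/odd case split in the definition of an evolution disappears. *)
Lemma shift_evolution_iff (c : Z -> bool) (s : Z -> nat -> bool) :
  is_evolution shiftCA c s <->
  (forall i, s i 0 = c i) /\
  (forall i k, 1 <= k -> s i k = s (i + 1)%Z (2 * k - 1)).
Proof.
  unfold is_evolution, shiftCA; simpl.
  split; intros [Hinit Hstep]; split; auto;
    intros i k Hk; rewrite (Hstep i k Hk); destruct (Nat.even k); reflexivity.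
Qed.

Definition constant_after_start (c : Z -> bool) (b : bool) (i : Z) (k : nat)
  : bool :=
  match k with O => c i | S _ => b end.

(* It is an evolution of the shift: for k >= 1 both (i,k) and (i+1,2k-1) are
   cycles of positive index, so both carry the value b. *)
Lemma constant_after_start_evolution (c : Z -> bool) (b : bool) :
  is_evolution shiftCA c (constant_after_start c b).
Proof.
  apply shift_evolution_iff; split.
  - reflexivity.
  - intros i k Hk.
    destruct k as [|k]; [lia|].
    replace (2 * S k - 1) with (S (2 * k)) by lia.
    reflexivity.
Qed.

Theorem mainTheorem2 :
  forall (c : Z -> bool) (b : bool),
    exists s : Z -> nat -> bool, is_evolution shiftCA c s /\ s 0%Z 1 = b.
Proof.
  intros c b.
  exists (constant_after_start c b).
  split.
  - apply constant_after_start_evolution.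
  - reflexivity.
Qed.
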